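(* Let $\mathbf{O}\,\dot\cup\,\mathbf{S}$ be a finite set of categorical variables, $\mathcal{G}$ a DAG over $\mathbf{O}\cup\mathbf{S}$, $\hat{\mathbf{s}}$ a fixed value of $\mathbf{S}$, and $\mathcal{G}'$ the subgraph of $\mathcal{G}$ obtained by removing all edges out of nodes in $\mathbf{S}$. Then $\mathbf{BN}(\mathcal{G}')[^{\mathbf{S}=\hat{\mathbf{s}}}=\mathbf{BN}(\mathcal{G})[^{\mathbf{S}=\hat{\mathbf{s}}}$.
   Context: $\mathbf{BN}(\mathcal{G})$ is the set of distributions $P$ over the nodes of DAG $\mathcal{G}$ satisfying the Markov condition: each variable is independent of its non-descendants that are not parents, given its parents (equivalently, $p(\mathbf{x})=\prod_X p(x\mid \mathrm{pa}_{\mathcal{G}}(X))$). For a model $\mathbf{M}$ over $\mathbf{O}\cup\mathbf{S}$, $\mathbf{M}[^{\mathbf{S}=\hat{\mathbf{s}}}$ (selection) is the set of distributions $Q$ over $\mathbf{O}$ such that there is $P\in\mathbf{M}$ with $p(\hat{\mathbf{s}})>0$ and $q(\mathbf{o})=p(\mathbf{o}\mid\hat{\mathbf{s}})$ for all $\mathbf{o}$. *)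

From HB Require Import structures.
From mathcomp Require Import all_boot all_order all_algebra.
Set Implicit Arguments. Unset Strict Implicit. Unset Printing Implicit Defensive.
Import Order.TTheory GRing.Theory Num.Theory.
Local Open Scope ring_scope.

Definition assign (V : finType) (D : V -> finType) := {dffun forall v : V, D v}.

Definition is_dist (R : realFieldType) (V : finType) (D : V -> finType)
  (p : assign D -> R) : Prop :=
  (forall x, 0 <= p x) /\ \sum_(x : assign D) p x = 1.

(* A DAG over V: an edge relation e (u -> v iff e u v) without directed cycles. *)
Definition acyclic (V : finType) (e : rel V) : Prop :=
  forall x : V, ~~ [exists y, e x y && connect e y x].

Definition parents (V : finType) (e : rel V) (v : V) : {set V} := [set u | e u v].

Definition marg (R : realFieldType) (V : finType) (D : V -> finType)
  (p : assign D -> R) (A : {set V}) (x : assign D) : R :=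
  \sum_(y : assign D | [forall u in A, y u == x u]) p y.

(* Conditional probability p(x_v | x_pa(v)) = p(x_v, x_pa) / p(x_pa)
   (MathComp convention: division by 0 gives 0). *)
Definition cond (R : realFieldType) (V : finType) (D : V -> finType)
  (e : rel V) (p : assign D -> R) (v : V) (x : assign D) : R :=
  marg p (v |: parents e v) x / marg p (parents e v) x.

Definition BN (R : realFieldType) (V : finType) (D : V -> finType) (e : rel V)
  (p : assign D -> R) : Prop :=
  is_dist p /\ forall x : assign D, p x = \prod_(v : V) cond e p v x.

(* Variables O ∪ S encoded as the disjoint sum O + S. *)
Section Sel.
Variables (O S : finType) (D : (O + S)%type -> finType).

Definition assignO := {dffun forall o : O, D (inl o)}.
Definition assignS := {dffun forall s : S, D (inr s)}.

Definition join (o : assignO) (s : assignS) : assign D :=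
  [ffun v => match v as v0 return D v0 with inl a => o a | inr b => s b end].

Definition probS (R : realFieldType) (p : assign D -> R) (sh : assignS) : R :=
  \sum_(o : assignO) p (join o sh).

(* M[^{S = ŝ}] : selection of a model M (a set of distributions over O ∪ S). *)
Definition select (R : realFieldType) (M : (assign D -> R) -> Prop) (sh : assignS)
  (q : assignO -> R) : Prop :=
  exists p, M p /\ 0 < probS p sh /\ forall o : assignO, q o = p (join o sh) / probS p sh.
End Sel.

Definition cut_S (O S : finType) (e : rel (O + S)%type) : rel (O + S)%type :=
  fun u v => e u v && (if u is inl _ then true else false).

(* A distribution p is in BN(g) iff it is the product of local kernels
   k_v(x_v | x_pa(v)), each nonnegative and summing to 1 over x_v.
   - [kprod_BN]: for an acyclic g, any such product of kernels is in BN(g);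
     the key fact is that marginalising the product over an ancestral set
     removes the kernels of its sinks one at a time.
   - [BN_kernel_factorization]: conversely every p in BN(g) is the product of
     its own conditionals (completed arbitrarily where the parents have
     probability 0).
   The theorem then follows in two directions:
   - G' is a subgraph of G, and BN is monotone in the graph ([BN_mono]);
   - given p in BN(G), replace in each kernel k_v the S-parents of v by their
     selected values ŝ: the kernels now depend only on G'-parents, so their
     product lies in BN(G'), and it coincides with p wherever S = ŝ
     ([BN_clampS], [select_transfer]). *)
From HB Require Import structures.
From mathcomp Require Import all_boot all_order all_algebra.
Set Implicit Arguments. Unset Strict Implicit. Unset Printing Implicit Defensive.
Import Order.TTheory GRing.Theory Num.Theory.
Local Open Scope ring_scope.

Section Agreement.
Variables (V : finType) (D : V -> finType).
Implicit Types (x y z : assign D) (A B E : {set V}).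

Definition agree A y x : bool := [forall u in A, y u == x u].

Definition override A y x : assign D := [ffun w => if w \in A then y w else x w].

Lemma agreeP A y x : reflect (forall u, u \in A -> y u = x u) (agree A y x).
Proof.
apply: (iffP forall_inP) => H u Hu; first exact/eqP/H.
by rewrite H.
Qed.

Lemma agree_setT y x : agree setT y x = (y == x).
Proof. by apply/agreeP/eqP => [H|-> //]; apply/ffunP => u; apply: H; rewrite inE. Qed.

Lemma agree_sub A B y x : A \subset B -> agree B y x -> agree A y x.
Proof. by move=> /subsetP sAB /agreeP H; apply/agreeP => u /sAB /H. Qed.

Lemma agree_trans A t y x : agree A y x -> agree A t y = agree A t x.
Proof. by move=> /agreeP Hyx; apply/agreeP/agreeP => H u Hu; rewrite H // Hyx. Qed.

Lemma agree_override A y x : agree (~: A) (override A y x) x.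
Proof. by apply/agreeP => u; rewrite inE ffunE => /negbTE ->. Qed.

Variable R : realFieldType.

Lemma sum_agree_setT x (f : assign D -> R) : \sum_(y | agree setT y x) f y = f x.
Proof. by rewrite (eq_bigl (pred1 x)) ?big_pred1_eq // => y; rewrite agree_setT. Qed.

Lemma sum_agree_split B E x (f : assign D -> R) : [disjoint B & E] ->
  \sum_(y | agree B y x) f y =
  \sum_(z | agree (B :|: E) z x) \sum_(y | agree (~: E) y z) f y.
Proof.
move=> dBE.
rewrite (partition_big (override E x) (fun z => agree (B :|: E) z x)); last first.
  move=> y /agreeP Hy; apply/agreeP => u; rewrite inE ffunE.
  by case: ifP => // _; rewrite orbF; apply: Hy.
apply: eq_bigr => z /agreeP Hz; apply: eq_bigl => y.
apply/andP/agreeP => [[_ /eqP <-] u|Hyz].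
  by rewrite inE ffunE => /negbTE ->.
split.
  apply/agreeP => u Bu; rewrite Hyz ?inE ?(disjointFr dBE Bu) //.
  by rewrite Hz // inE Bu.
apply/eqP/ffunP => u; rewrite ffunE; case: ifP => Eu.
  by rewrite Hz // inE Eu orbT.
by rewrite Hyz // inE Eu.
Qed.

Lemma sum_override v x z (f : assign D -> R) :
  \sum_(y | agree (~: [set v]) y x) f (override [set v] y z) =
  \sum_(y | agree (~: [set v]) y z) f y.
Proof.
have overrideK a b y : agree (~: [set v]) y b ->
    override [set v] (override [set v] y a) b = y.
  move=> /agreeP Hy; apply/ffunP => w; rewrite !ffunE.
  by case: ifP => Hw; [rewrite Hw | rewrite Hy // inE Hw].
rewrite [RHS](reindex_onto (override [set v] ^~ z) (override [set v] ^~ x)).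
  2: by move=> y /overrideK.
apply: eq_bigl => y; rewrite agree_override andTb.
by apply/idP/eqP => [/overrideK|<-]; last exact: agree_override.
Qed.

End Agreement.

Section Acyclic.
Variables (V : finType) (g : rel V).
Hypothesis acyclic_g : acyclic g.

Lemma acyclic_irrefl v : ~~ g v v.
Proof.
by apply/negP => gvv; move/existsPn/(_ v): (acyclic_g v); rewrite gvv connect0.
Qed.

Lemma acyclic_no_back u w : g u w -> ~~ connect g w u.
Proof. by move=> guw; move/existsPn/(_ w): (acyclic_g u); rewrite guw. Qed.

(* Every nonempty set of vertices contains a sink of the induced subgraph: a
   vertex reaching the fewest vertices. *)
Lemma exists_sink C : C != set0 -> exists2 u, u \in C & forall w, w \in C -> ~~ g u w.
Proof.
case/set0Pn => u0 Cu0.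
case: (arg_minnP (fun u => #|[set w | connect g u w]|) Cu0) => u Cu umin.
exists u => // w Cw; apply/negP => guw.
have := umin w Cw; rewrite leqNgt => /negP; apply; apply: proper_card.
apply/properP; split.
  by apply/subsetP => t; rewrite !inE; apply: connect_trans (connect1 guw).
by exists u; rewrite !inE ?connect0 ?(acyclic_no_back guw).
Qed.

Lemma acyclic_sub (g' : rel V) : subrel g' g -> acyclic g'.
Proof.
move=> sub x; apply/existsPn => y; apply/negP => /andP[/sub gxy c'yx].
have cyx : connect g y x by apply: connect_sub c'yx => u w /sub/connect1.
by move/existsPn/(_ y): (acyclic_g x); rewrite gxy cyx.
Qed.

End Acyclic.

Definition ancestral (V : finType) (g : rel V) (A : {set V}) : Prop :=
  forall w t, w \in A -> g t w -> t \in A.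

Lemma ancestors_ancestral (V : finType) (g : rel V) (v : V) :
  ancestral g [set u | connect g u v].
Proof. by move=> w t; rewrite !inE => cwv gtw; apply: connect_trans (connect1 gtw) cwv. Qed.

Section Marginals.
Variables (R : realFieldType) (V : finType) (D : V -> finType).
Variable p : assign D -> R.
Implicit Types (x y : assign D) (B C : {set V}).

Lemma marg_agree B C y x : B \subset C -> agree C y x -> marg p B y = marg p B x.
Proof.
by move=> sBC ayx; apply: eq_bigl => t; apply: agree_trans; apply: agree_sub ayx.
Qed.

Hypothesis p_ge0 : forall x, 0 <= p x.

Lemma marg_ge0 B x : 0 <= marg p B x.
Proof. exact: sumr_ge0. Qed.

Lemma le_marg B x : p x <= marg p B x.
Proof.
rewrite /marg (bigD1 x) /=; last by apply/forall_inP.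
by rewrite lerDl sumr_ge0.
Qed.

End Marginals.

Section KernelProduct.
Variables (R : realFieldType) (V : finType) (D : V -> finType).
Implicit Types (x y z : assign D) (A B C : {set V}).
Variable g : rel V.
Hypothesis acyclic_g : acyclic g.

Variable k : V -> assign D -> R.
Hypothesis k_ge0 : forall v x, 0 <= k v x.
Hypothesis k_local : forall v y x, agree (v |: parents g v) y x -> k v y = k v x.
Hypothesis k_norm : forall v x, \sum_(y | agree (~: [set v]) y x) k v y = 1.

Definition kprod x : R := \prod_v k v x.

(* Summing the kernels of any set C over the values of C gives 1: peel off a
   sink of C, whose kernel sums to 1 while the others do not depend on it. *)
Lemma kernel_prod_norm C x : \sum_(y | agree (~: C) y x) \prod_(w in C) k w y = 1.
Proof.
elim: {C}_.+1 {-2}C (ltnSn #|C|) x => // n IH C ltCn x.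
have [->|/(exists_sink acyclic_g)[u Cu sink_u]] := eqVneq C set0.
  by rewrite setC0 sum_agree_setT big_set0.
have CuE : ~: C :|: [set u] = ~: (C :\ u).
  by apply/setP => t; rewrite !inE negb_and negbK orbC.
rewrite (@sum_agree_split _ _ _ _ [set u]) ?CuE; last first.
  by rewrite disjoint_sym disjoints1 inE negbK.
rewrite -[RHS](IH (C :\ u) _ x); last by rewrite (cardsD1 u C) Cu in ltCn.
apply: eq_bigr => z agree_z.
rewrite -[RHS]mul1r -(k_norm u z) mulr_suml; apply: eq_bigr => y agree_y.
rewrite (bigD1 u Cu); congr (_ * _); apply: eq_big => [w|w /andP[Cw wu]].
  by rewrite in_setD1 andbC.
apply: k_local; apply: agree_sub agree_y; apply/subsetP => t.
rewrite !inE => /orP[/eqP -> //|gtw].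
by apply: contraNneq (sink_u w Cw) => <-.
Qed.

Lemma marg_kprod_ancestral A B x : ancestral g A -> B \subset A ->
  marg kprod B x = \sum_(z | agree (B :|: ~: A) z x) \prod_(w in A) k w z.
Proof.
move=> ancA sBA; rewrite /marg -/(agree B).
rewrite (@sum_agree_split _ _ _ _ (~: A)); last by rewrite -subsets_disjoint.
apply: eq_bigr => z _; rewrite setCK.
rewrite -[RHS]mulr1 -{2}(kernel_prod_norm (~: A) z) setCK mulr_sumr.
apply: eq_bigr => y agree_y; rewrite /kprod (bigID (mem A)) /=; congr (_ * _).
  apply: eq_bigr => w Aw; apply: k_local; apply: agree_sub agree_y.
  by apply/subsetP => t; rewrite !inE => /orP[/eqP -> //|]; apply: ancA.
by apply: eq_bigl => w; rewrite inE.
Qed.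

(* The marginal on v and its parents factors as the kernel of v times the
   marginal on the parents: work inside the ancestors A of v, where the
   kernels of the other ancestors do not read x_v. *)
Lemma marg_kprod_family v x :
  marg kprod (v |: parents g v) x = k v x * marg kprod (parents g v) x.
Proof.
set A := [set u | connect g u v].
have ancA : ancestral g A by exact: ancestors_ancestral.
have Av : v \in A by rewrite inE connect0.
have paA : parents g v \subset A by apply/subsetP => t; rewrite !inE; apply: connect1.
have others_indep y z : agree (~: [set v]) y z ->
    \prod_(w in A | w != v) k w y = \prod_(w in A | w != v) k w z.
  move=> ayz; apply: eq_bigr => w /andP[Aw wv]; apply: k_local.
  apply: agree_sub ayz; apply/subsetP => t; rewrite !inE => /orP[/eqP -> //|gtw].
  by apply: contraTneq Aw => tv; rewrite inE -tv (acyclic_no_back acyclic_g gtw).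
rewrite !(marg_kprod_ancestral _ ancA) ?subUset ?sub1set ?Av ?paA //.
rewrite [in RHS](@sum_agree_split _ _ _ _ [set v]); last first.
  by rewrite disjoint_sym disjoints1 !inE negb_or negbK connect0 (acyclic_irrefl acyclic_g).
have -> : parents g v :|: ~: A :|: [set v] = v |: parents g v :|: ~: A.
  by rewrite setUC setUA.
rewrite mulr_sumr; apply: eq_bigr => z az.
have sum_v : \sum_(y | agree (~: [set v]) y z) \prod_(w in A) k w y =
    \prod_(w in A | w != v) k w z.
  rewrite (eq_bigr (fun y => k v y * \prod_(w in A | w != v) k w z)).
    by rewrite -mulr_suml k_norm mul1r.
  by move=> y ayz; rewrite (bigD1 v Av); congr (_ * _); apply: others_indep.
rewrite sum_v (bigD1 v Av) /=; congr (_ * _); apply: k_local.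
by apply: agree_sub az; apply: subsetUl.
Qed.

Lemma kprod_ge0 x : 0 <= kprod x.
Proof. exact: prodr_ge0. Qed.

(* A product of kernels along an acyclic graph is a Bayesian network on it:
   its conditionals are the kernels, except where the parents have
   probability 0, and there the product vanishes too.  The assignment x0
   only witnesses that assignments exist. *)
Lemma kprod_BN (x0 : assign D) : BN g kprod.
Proof.
split; first split; first exact: kprod_ge0.
  rewrite -(kernel_prod_norm setT x0) setCT.
  apply: eq_big => [y|y _]; first by apply/esym/agreeP => u; rewrite inE.
  by apply: eq_bigl => w; rewrite inE.
move=> x; have [pa_pos|] := boolP [forall v, marg kprod (parents g v) x != 0].
  apply: eq_bigr => v _; rewrite /cond marg_kprod_family mulfK //.
  exact: (forallP pa_pos).
move/forallPn => [v /negPn/eqP pa0].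
rewrite [RHS](bigD1 v) //= /cond pa0 invr0 mulr0 mul0r.
by apply/eqP; rewrite eq_le kprod_ge0 andbT -pa0 le_marg //; apply: kprod_ge0.
Qed.

End KernelProduct.

Section CanonicalKernel.
Variables (R : realFieldType) (V : finType) (D : V -> finType).
Implicit Types (x y : assign D).
Variables (g : rel V) (p : assign D -> R) (x0 : assign D).
Hypothesis p_ge0 : forall x, 0 <= p x.
Hypothesis g_irrefl : forall v, ~~ g v v.

Definition ckernel v x : R :=
  if marg p (parents g v) x == 0 then (x v == x0 v)%:R else cond g p v x.

Lemma ckernel_ge0 v x : 0 <= ckernel v x.
Proof.
by rewrite /ckernel; case: ifP => _; rewrite ?ler0n // divr_ge0 ?marg_ge0.
Qed.

Lemma ckernel_local v y x : agree (v |: parents g v) y x -> ckernel v y = ckernel v x.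
Proof.
move=> ayx; rewrite /ckernel /cond !(marg_agree p _ ayx) ?subsetUr //.
by move/agreeP: ayx => /(_ v (setU11 _ _)) ->.
Qed.

Lemma parents_notin v : parents g v \subset ~: [set v].
Proof. by apply/subsetP => t; rewrite !inE; apply: contraTneq => ->. Qed.

Lemma sum_marg_family v x :
  \sum_(y | agree (~: [set v]) y x) marg p (v |: parents g v) y = marg p (parents g v) x.
Proof.
rewrite [RHS](@sum_agree_split _ _ _ _ (~: (v |: parents g v))); last first.
  by rewrite -subsets_disjoint subsetUr.
have -> : parents g v :|: ~: (v |: parents g v) = ~: [set v].
  apply/setP => t; rewrite !inE; case: (eqVneq t v) => [->|_]; last by case: (g t v).
  by rewrite (negbTE (g_irrefl v)).
by apply: eq_bigr => z _; rewrite setCK.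
Qed.

Lemma ckernel_norm v x : \sum_(y | agree (~: [set v]) y x) ckernel v y = 1.
Proof.
have pa_same y : agree (~: [set v]) y x -> marg p (parents g v) y = marg p (parents g v) x.
  exact: marg_agree (parents_notin v).
under eq_bigr => y ay do rewrite /ckernel /cond (pa_same y ay).
have [pa0|pa_pos] := eqVneq (marg p (parents g v) x) 0.
  rewrite (bigD1 (override [set v] x0 x)) ?agree_override //= ffunE inE eqxx eqxx.
  rewrite big1 ?addr0 // => y /andP[ayx y_ne]; case: eqP => // yv.
  case/eqP: y_ne; apply/ffunP => w; rewrite ffunE inE.
  by case: eqP => [->//|/eqP wv]; apply: (agreeP _ _ _ ayx); rewrite !inE.
by rewrite -mulr_suml sum_marg_family divff.
Qed.

End CanonicalKernel.

Section Factorization.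
Variables (R : realFieldType) (V : finType) (D : V -> finType).
Implicit Types (p q : assign D -> R) (g : rel V).

(* Two distributions such that q agrees with p wherever p is nonzero are
   equal: q - p is nonnegative and sums to 0. *)
Lemma dist_eq_on_support p q : is_dist p -> is_dist q ->
  (forall x, p x != 0 -> q x = p x) -> forall x, q x = p x.
Proof.
move=> [_ p1] [q_ge0 q1] qp.
have d_ge0 x : 0 <= q x - p x.
  by have [->|/qp ->] := eqVneq (p x) 0; rewrite ?subr0 ?subrr.
have d0 : \sum_x (q x - p x) = 0 by rewrite sumrB q1 p1 subrr.
by move=> x; apply/eqP; rewrite -subr_eq0 (psumr_eq0P (fun x _ => d_ge0 x) d0).
Qed.

Lemma dist_witness p : is_dist p -> exists x, p x != 0.
Proof.
move=> [_ p1]; case: (pickP (fun x => p x != 0)) => [x px|p0]; first by exists x.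
move: p1; rewrite big1 => [/eqP|x _]; last exact/eqP/negbFE/p0.
by rewrite eq_sym oner_eq0.
Qed.

Lemma BN_kernel_factorization g p (x0 : assign D) : acyclic g -> BN g p ->
  forall x, kprod (ckernel g p x0) x = p x.
Proof.
move=> acyc_g [p_dist p_fact]; have p_ge0 := p_dist.1.
have [q_dist _] : BN g (kprod (ckernel g p x0)).
  apply: (kprod_BN acyc_g _ _ _ x0) => [v x|v y x|v x]; first exact: ckernel_ge0.
    exact: ckernel_local.
  exact/ckernel_norm/acyclic_irrefl.
apply: dist_eq_on_support => // x px; rewrite p_fact; apply: eq_bigr => v _.
rewrite /ckernel ifF //; apply: contraNF px => /eqP pa0.
by rewrite eq_le p_ge0 andbT -pa0 le_marg.
Qed.

Lemma eq_BN g p q : (forall x, p x = q x) -> BN g q -> BN g p.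
Proof.
move=> pq [[q_ge0 q1] q_fact].
have marg_pq B x : marg p B x = marg q B x by apply: eq_bigr => y _.
split; first by split=> [x|]; rewrite ?pq // (eq_bigr _ (fun x _ => pq x)).
by move=> x; rewrite pq q_fact; apply: eq_bigr => v _; rewrite /cond !marg_pq.
Qed.

(* BN is monotone in the graph: adding edges (keeping acyclicity) can only
   enlarge the model, since kernels local for g' are local for g. *)
Lemma BN_mono g' g p : subrel g' g -> acyclic g -> BN g' p -> BN g p.
Proof.
move=> sub acyc_g p_BN; have acyc_g' := acyclic_sub acyc_g sub.
have [x0 _] := dist_witness p_BN.1; have p_ge0 := p_BN.1.1.
apply: (eq_BN (fun x => esym (BN_kernel_factorization x0 acyc_g' p_BN x))).
apply: (kprod_BN acyc_g _ _ _ x0) => [v x|v y x ayx|v x]; first exact: ckernel_ge0.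
  apply: ckernel_local; apply: agree_sub ayx; apply: setUS.
  by apply/subsetP => t; rewrite !inE => /sub.
exact/ckernel_norm/acyclic_irrefl.
Qed.

End Factorization.

Section Selection.
Variables (R : realFieldType) (O S : finType) (D : (O + S)%type -> finType).
Variable sh : assignS D.

Lemma select_transfer (M1 M2 : (assign D -> R) -> Prop) :
  (forall p, M1 p -> exists2 p', M2 p' & forall o, p' (join o sh) = p (join o sh)) ->
  forall q, select M1 sh q -> select M2 sh q.
Proof.
move=> M12 q [p [M1p [pS_pos q_def]]]; have [p' M2p' p'p] := M12 p M1p.
have pS' : probS p' sh = probS p sh by apply: eq_bigr => o _; rewrite p'p.
by exists p'; rewrite pS'; do 2!split=> //; move=> o; rewrite q_def p'p.
Qed.

Variable e : rel (O + S)%type.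
Hypothesis acyclic_e : acyclic e.

Lemma cut_S_sub : subrel (cut_S e) e.
Proof. by move=> u v /andP[]. Qed.

(* x with every S-variable other than v clamped to its selected value. *)
Definition clampS (v : O + S) (x : assign D) : assign D :=
  override [set v] x (join [ffun a => x (inl a)] sh).

Lemma clampS_join v (o : assignO D) : clampS v (join o sh) = join o sh.
Proof.
apply/ffunP => w; rewrite !ffunE; case: ifP => // _.
by case: w => [a|b]; rewrite /= ?ffunE.
Qed.

Lemma clampS_override v y x : agree (~: [set v]) y x ->
  clampS v y = override [set v] y (join [ffun a => x (inl a)] sh).
Proof.
move/agreeP => ayx; apply/ffunP => w; rewrite !ffunE; case: ifP => // wv.
by case: w wv => [a|b] wv; rewrite /= ?ffunE ?ayx // inE wv.
Qed.

Lemma clampS_local v y x : agree (v |: parents (cut_S e) v) y x ->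
  agree (v |: parents e v) (clampS v y) (clampS v x).
Proof.
move/agreeP => ayx; apply/agreeP => t; rewrite !ffunE; case: ifP => [tv _|tv].
  by apply: ayx; rewrite inE tv.
rewrite in_setU tv orFb inE => etv; case: t tv etv => [a|b] _ etv //=; rewrite !ffunE.
by apply: ayx; rewrite !inE /cut_S etv orbT.
Qed.

(* Clamping the canonical kernels of p in BN(G) yields a member of BN(G')
   that coincides with p on S = ŝ. *)
Lemma BN_clampS (p : assign D -> R) : BN e p ->
  exists2 p', BN (cut_S e) p' & forall o, p' (join o sh) = p (join o sh).
Proof.
move=> p_BN; have [x0 _] := dist_witness p_BN.1; have p_ge0 := p_BN.1.1.
pose k v x := ckernel e p x0 v (clampS v x).
exists (kprod k) => [|o]; last first.
  rewrite -(BN_kernel_factorization x0 acyclic_e p_BN).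
  by apply: eq_bigr => v _; rewrite /k clampS_join.
apply: (kprod_BN (acyclic_sub acyclic_e cut_S_sub) _ _ _ x0) => [v x|v y x ayx|v x].
- exact: ckernel_ge0.
- exact/ckernel_local/clampS_local.
- under eq_bigr => y ayx do rewrite /k (clampS_override ayx).
  by rewrite sum_override; apply/ckernel_norm/acyclic_irrefl.
Qed.

End Selection.

Theorem lemma3 (R : realFieldType) (O S : finType) (D : (O + S)%type -> finType)
  (e : rel (O + S)%type) (He : acyclic e) (sh : assignS D) (q : assignO D -> R) :
  select (BN (cut_S e)) sh q <-> select (BN e) sh q.
Proof.
split; apply: select_transfer => p p_BN.
- by exists p => //; apply: BN_mono p_BN; [exact: cut_S_sub | exact: He].
- exact: BN_clampS.
Qed.
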